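(* Let $k\in\{1,2,3,4\}$ and let $\hat Q=(\hat\pi,\hat g_{k-1},\hat g_k,\hat\mu_k,\hat{\mathscr B}_k,\hat{\mathscr C}_{\mathscr B_k})$ be any fixed functions with $\hat\pi,\hat g_{k-1},\hat g_k$ taking values in $(0,1)$ and $\hat g_0=\hat\pi$; for $k=1$ take $\hat{\mathscr C}_{\mathscr B_1}(X)=\hat{\mathscr B}_1(1,X)$. Define $h(\hat Q)(O)=\frac{1-R}{1-\hat\pi(X)}\frac{\hat g_k(\overline M_k,X)}{1-\hat g_k(\overline M_k,X)}\frac{1-\hat g_{k-1}(\overline M_{k-1},X)}{\hat g_{k-1}(\overline M_{k-1},X)}\{Y-\hat\mu_k(\overline M_k,0,X)\}+\frac{R}{1-\hat\pi(X)}\frac{1-\hat g_{k-1}(\overline M_{k-1},X)}{\hat g_{k-1}(\overline M_{k-1},X)}\{\hat\mu_k(\overline M_k,0,X)-\hat{\mathscr B}_k(\overline M_{k-1},1,X)\}+\frac{1-R}{1-\hat\pi(X)}\{\hat{\mathscr B}_k(\overline M_{k-1},1,X)-\hat{\mathscr C}_{\mathscr B_k}(X)\}+\hat{\mathscr C}_{\mathscr B_k}(X)$. Then $$\mathbb E_P[h(\hat Q)(O)]-\gamma_{R\to M_k\leadsto Y}=\mathbb E_P\Big[\frac{1}{1-\hat\pi}\frac{1}{1-\hat g_k}\frac{1-\hat g_{k-1}}{\hat g_{k-1}}(g_k-\hat g_k)(\hat\mu_k-\mu_k)+\frac{1}{1-\hat\pi}\frac{1}{\hat g_{k-1}}(\hat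 g_{k-1}-g_{k-1})(\hat{\mathscr B}_k-\mathscr B_k)+\frac{1}{1-\hat\pi}(\pi-\hat\pi)(\hat{\mathscr C}_{\mathscr B_k}-\mathscr C_{\mathscr B_k})\Big],$$ where $\pi,\hat\pi$ are evaluated at $X$, $g_k,\hat g_k$ at $(\overline M_k,X)$, $g_{k-1},\hat g_{k-1}$ at $(\overline M_{k-1},X)$, $\mu_k,\hat\mu_k$ at $(\overline M_k,0,X)$, $\mathscr B_k,\hat{\mathscr B}_k$ at $(\overline M_{k-1},1,X)$, and $\mathscr C_{\mathscr B_k},\hat{\mathscr C}_{\mathscr B_k}$ at $X$. For $k=1$ this equals $\mathbb E_P\big[\frac{1}{\hat\pi}\frac{1}{1-\hat g_1}(g_1-\hat g_1)(\hat\mu_1-\mu_1)+\frac{1}{\hat\pi}(\hat\pi-\pi)(\hat{\mathscr B}_1-\mathscr B_1)\big]$.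
   Context: Let $O=(X,R,M_1,M_2,M_3,M_4,Y)$ have distribution $P$, where $X$ is a covariate vector, $R\in\{0,1\}$, $M_1,\dots,M_4$ are mediators, and $Y$ is a real-valued square-integrable outcome. Write $\overline M_k=(M_1,\dots,M_k)$, $\overline M_0=\emptyset$. Assume positivity: $0<P(R=1\mid\overline M_j,X)<1$ a.s., $j=0,\dots,4$. Nuisances: $\pi(X)=P(R=1\mid X)$; $g_j(\overline M_j,X)=P(R=1\mid\overline M_j,X)$ with $g_0=\pi$; $\mu_k(\overline M_k,r,X)=\mathbb E[Y\mid\overline M_k,R=r,X]$; $\mathscr B_k(\overline M_{k-1},1,X)=\mathbb E[\mu_k(\overline M_k,0,X)\mid\overline M_{k-1},R=1,X]$; $\mathscr C_{\mathscr B_k}(X)=\mathbb E[\mathscr B_k(\overline M_{k-1},1,X)\mid R=0,X]$ for $k=2,3,4$ and $\mathscr C_{\mathscr B_1}(X)=\mathscr B_1(1,X)$. Target: $\gamma_{R\to M_k\leadsto Y}=\int y\,dP(y\mid\overline m_4,R=0,x)\,dP(m_k\mid\overline m_{k-1},R=1,x)\prod_{j\ne k}dP(m_j\mid\overline m_{j-1},R=0,x)\,dP(x)$. All expectations are over a single draw $O\sim P$ with $\hat Q$ held fixed. *)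

From Stdlib Require List.
From mathcomp Require Import all_boot all_order all_algebra all_classical all_reals all_analysis.
Set Implicit Arguments.
Unset Strict Implicit.
Unset Printing Implicit Defensive.
Import Order.TTheory GRing.Theory Num.Theory.
Local Open Scope classical_set_scope.
Local Open Scope ring_scope.

Section Setting.
Context {R : realType} {d : measure_display} {Omega : measurableType d}
  (P : probability Omega R).

Definition preim_sys {dT} {T : measurableType dT} (Z : Omega -> T)
  : set (set Omega) := [set Z @^-1` B | B in @measurable _ T].

Definition sigmaMX {dX d1 d2 d3 d4} {TX : measurableType dX}
  {T1 : measurableType d1} {T2 : measurableType d2}
  {T3 : measurableType d3} {T4 : measurableType d4}
  (X : Omega -> TX) (M1 : Omega -> T1) (M2 : Omega -> T2)
  (M3 : Omega -> T3) (M4 : Omega -> T4) (j : nat) : set (set Omega) :=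
  <<s preim_sys X
      `|` (if (1 <= j)%N then preim_sys M1 else set0)
      `|` (if (2 <= j)%N then preim_sys M2 else set0)
      `|` (if (3 <= j)%N then preim_sys M3 else set0)
      `|` (if (4 <= j)%N then preim_sys M4 else set0) >>.

Definition sub_meas (G : set (set Omega)) (f : Omega -> R) : Prop :=
  forall B : set R, measurable B -> G (f @^-1` B).

Definition ind (b : bool) : R := (b : nat)%:R.

Definition intg (f : Omega -> R) : Prop := P.-integrable setT (EFin \o f).

Definition is_condexp (G : set (set Omega)) (f h : Omega -> R) : Prop :=
  [/\ sub_meas G h, intg f, intg h &
      forall A, G A ->
        (\int[P]_(w in A) (f w)%:E = \int[P]_(w in A) (h w)%:E)%E].

(* h (a G-measurable r.v., i.e. a function of the G-generating variables)
   is (a version of) E[f | G, Rv = r] : conditional expectation within the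
   arm {Rv = r}. *)
Definition is_condexp_arm (Rv : Omega -> bool) (r : bool)
  (G : set (set Omega)) (f h : Omega -> R) : Prop :=
  [/\ sub_meas G h,
      P.-integrable [set w | Rv w = r] (EFin \o f),
      P.-integrable [set w | Rv w = r] (EFin \o h) &
      forall A, G A ->
        (\int[P]_(w in A `&` [set w | Rv w = r]) (f w)%:E
         = \int[P]_(w in A `&` [set w | Rv w = r]) (h w)%:E)%E].

Definition hQ (Rv : Omega -> bool) (Y pih gkm1h gkh muh Bh Ch : Omega -> R)
  (w : Omega) : R :=
  (1 - ind (Rv w)) / (1 - pih w) * (gkh w / (1 - gkh w))
     * ((1 - gkm1h w) / gkm1h w) * (Y w - muh w)
  + ind (Rv w) / (1 - pih w) * ((1 - gkm1h w) / gkm1h w) * (muh w - Bh w)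
  + (1 - ind (Rv w)) / (1 - pih w) * (Bh w - Ch w)
  + Ch w.

Definition remainder (pi pih gkm1 gkm1h gk gkh mu muh B Bh C Ch : Omega -> R)
  (w : Omega) : R :=
  1 / (1 - pih w) * (1 / (1 - gkh w)) * ((1 - gkm1h w) / gkm1h w)
     * (gk w - gkh w) * (muh w - mu w)
  + 1 / (1 - pih w) * (1 / gkm1h w) * (gkm1h w - gkm1 w) * (Bh w - B w)
  + 1 / (1 - pih w) * (pi w - pih w) * (Ch w - C w).

Definition remainder1 (pi pih g1 g1h mu muh B Bh : Omega -> R)
  (w : Omega) : R :=
  1 / pih w * (1 / (1 - g1h w)) * (g1 w - g1h w) * (muh w - mu w)
  + 1 / pih w * (pih w - pi w) * (Bh w - B w).

(* Integrability of the finitely many random variables appearing when the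
   expectations in the statement are expanded (the paper tacitly assumes
   all these expectations exist). *)
Definition integrability_conditions (Rv : Omega -> bool)
  (Y pi pih gkm1 gkm1h gk gkh mu muh B Bh C Ch : Omega -> R) : Prop :=
  let r1 w := ind (Rv w) in
  let r0 w := 1 - ind (Rv w) in
  let a w := 1 / (1 - pih w) in
  let b w := gkh w / (1 - gkh w) in
  let c w := (1 - gkm1h w) / gkm1h w in
  List.Forall intg
   [:: (fun w => r0 w * a w * b w * c w * Y w);
       (fun w => r0 w * a w * b w * c w * mu w);
       (fun w => r0 w * a w * b w * c w * muh w);
       (fun w => (1 - gk w) * a w * b w * c w * mu w);
       (fun w => (1 - gk w) * a w * b w * c w * muh w);
       (fun w => r1 w * a w * c w * mu w);
       (fun w => r1 w * a w * c w * muh w);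
       (fun w => r1 w * a w * c w * B w);
       (fun w => r1 w * a w * c w * Bh w);
       (fun w => gk w * a w * c w * mu w);
       (fun w => gk w * a w * c w * muh w);
       (fun w => gkm1 w * a w * c w * B w);
       (fun w => gkm1 w * a w * c w * Bh w);
       (fun w => r0 w * a w * B w);
       (fun w => r0 w * a w * Bh w);
       (fun w => r0 w * a w * C w);
       (fun w => r0 w * a w * Ch w);
       (fun w => (1 - gkm1 w) * a w * B w);
       (fun w => (1 - gkm1 w) * a w * Bh w);
       (fun w => (1 - pi w) * a w * C w);
       (fun w => (1 - pi w) * a w * Ch w);
       C; Ch].

End Setting.

(* Every summand of h(Qhat) is the product of a weight built from Qhat, which
   is measurable for sigma(Mbar_j, X), with an arm indicator 1{R = r} and an
   outcome.  Inside an expectation, the tower property replaces the indicator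
   by the propensity g_j (or 1 - g_j) and the outcome by its arm regression
   mu_k, B_k or C_{B_k}.  On the other side, the nested regressions defining
   gamma satisfy Q_k = mu_k, Q_{k-1} = B_k and Q_0 = C_{B_k} a.s. (uniqueness
   of arm-wise conditional expectations, which needs the positivity of g_j),
   so gamma = E[C_{B_k}].  After these substitutions both
   E[h(Qhat)] - gamma and the expected remainder are the same linear
   combination of expectations of the individual terms. *)
From mathcomp Require Import all_boot all_order all_algebra all_classical all_reals all_analysis.
From mathcomp Require Import measurable_realfun ring lra zify.
Import Order.TTheory GRing.Theory Num.Theory.
Import HBNNSimple.
Local Open Scope classical_set_scope.
Local Open Scope ring_scope.

Section Integrable.
Context {R : realType} {d : measure_display} {Omega : measurableType d}
  (P : probability Omega R).
Implicit Types (f h u : Omega -> R) (A : set Omega).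

Lemma intg_measurable f : intg P f -> measurable_fun setT f.
Proof. by case/integrableP => /measurable_EFinP. Qed.

Lemma eq_intg {f h} : intg P f -> (forall w, f w = h w) -> intg P h.
Proof. by move=> iff fh; have -> : h = f by apply/funext=> w; rewrite fh. Qed.

Lemma intg_cst (c : R) : intg P (fun=> c).
Proof. exact: finite_measure_integrable_cst. Qed.

Lemma intg_le {f h} : intg P h -> measurable_fun setT f ->
  (forall w, `|f w| <= `|h w|) -> intg P f.
Proof.
move=> ih mf fh; apply: le_integrable ih => //; first exact/measurable_EFinP.
by move=> w _ /=; rewrite lee_fin.
Qed.

Lemma intgD {f h} : intg P f -> intg P h -> intg P (fun w => f w + h w).
Proof. by move=> iff ih; exact: (integrableD measurableT iff ih). Qed.

Lemma intgZ (c : R) {f} : intg P f -> intg P (fun w => c * f w).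
Proof. by move=> iff; exact: (integrableZl measurableT c iff). Qed.

Lemma intgB {f h} : intg P f -> intg P h -> intg P (fun w => f w - h w).
Proof.
by move=> iff ih; apply: (eq_intg (intgD iff (intgZ (-1) ih))) => w; rewrite mulN1r.
Qed.

Lemma intg_indicM A u : measurable A -> intg P u -> intg P (fun w => \1_A w * u w).
Proof.
move=> mA iu; apply: (intg_le iu) => [|w].
  by apply: measurable_funM; [exact: measurable_indic | exact: intg_measurable].
by rewrite normrM indicE; case: (w \in A); rewrite ?normr1 ?normr0 ?mul1r ?mul0r.
Qed.

Lemma integral_indicMr A u : measurable A ->
  (\int[P]_(w in A) (u w)%:E = \int[P]_w (\1_A w * u w)%:E)%E.
Proof.
move=> mA; rewrite -[A in LHS]setTI integral_mkcondr.
apply: eq_integral => w _; rewrite /patch indicE.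
by case: (w \in A); rewrite /= ?mul1r ?mul0r.
Qed.

Definition mean f : R := fine (\int[P]_w (f w)%:E).

Lemma meanE f : intg P f -> (mean f)%:E = (\int[P]_w (f w)%:E)%E.
Proof. by move=> iff; rewrite fineK //; exact: integrable_fin_num. Qed.

Definition lincomb (s : seq (R * (Omega -> R))) w : R := \sum_(x <- s) x.1 * x.2 w.

Lemma intg_lincomb s : List.Forall (fun x => intg P x.2) s -> intg P (lincomb s).
Proof.
elim: s => [_|[c f] s IH /List.Forall_cons_iff [/= iff /IH ifs]].
  by apply: (eq_intg (intg_cst 0)) => w; rewrite /lincomb big_nil.
by apply: (eq_intg (intgD (intgZ c iff) ifs)) => w; rewrite /lincomb big_cons.
Qed.

Lemma mean_lincomb s : List.Forall (fun x => intg P x.2) s ->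
  mean (lincomb s) = \sum_(x <- s) x.1 * mean x.2.
Proof.
elim: s => [_|[c f] s IH /[dup] ics /List.Forall_cons_iff [/= iff ifs]].
  rewrite big_nil /mean -[RHS]/(fine 0%E) -(integral0 P setT).
  by congr fine; apply: eq_integral => w _; rewrite /lincomb big_nil.
rewrite big_cons -IH //; apply: EFin_inj.
rewrite EFinD EFinM !meanE //=; try exact: intg_lincomb.
transitivity (\int[P]_w (c * f w)%:E + \int[P]_w (lincomb s w)%:E)%E.
  rewrite -integralD_EFin //; [|exact: intgZ|exact: intg_lincomb].
  by apply: eq_integral => w _; rewrite /lincomb big_cons.
by congr (_ + _)%E; exact: (integralZl measurableT iff).
Qed.

End Integrable.
Arguments intg_measurable {R d Omega P f}.
Arguments eq_intg {R d Omega P f h}.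
Arguments intg_le {R d Omega P f h}.
Arguments intgD {R d Omega P f h}.
Arguments intgZ {R d Omega P} c {f}.
Arguments intgB {R d Omega P f h}.
Arguments meanE {R d Omega P f}.
Arguments intg_lincomb {R d Omega P s}.
Arguments mean_lincomb {R d Omega P s}.

Lemma measurable_inv (R : realType) : measurable_fun [set: R] GRing.inv.
Proof.
have -> : [set: R] = ~` [set 0] `|` [set 0] by rewrite setUC setUv.
apply/measurable_funU => //; first exact: measurableC.
split.
  apply: open_continuous_measurable_fun.
    exact/closed_openC/accessible_closed_set1/hausdorff_accessible/Rhausdorff.
  by move=> x; rewrite inE /= => /eqP x0; exact: inv_continuous.
move=> _ B mB; have [B0|B0] := pselect (B 0^-1).
  suff -> : [set 0] `&` GRing.inv @^-1` B = [set 0 : R] by [].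
  by apply/seteqP; split => [x []//|x /= ->]; split.
suff -> : [set 0] `&` GRing.inv @^-1` B = set0 by [].
by apply/seteqP; split => [x [/= -> ]//|x].
Qed.

Section SubMeas.
Context {R : realType} {d : measure_display} {Omega : measurableType d}.
Implicit Types (f h : Omega -> R) (G S : set (set Omega)).

Lemma sub_meas_measurable {G f} :
  G `<=` measurable -> sub_meas G f -> measurable_fun setT f.
Proof. by move=> GM Gf _ B mB; rewrite setTI; exact/GM/Gf. Qed.

Lemma sub_meas_sub {G G' f} : G `<=` G' -> sub_meas G f -> sub_meas G' f.
Proof. by move=> GG' Gf B mB; exact/GG'/Gf. Qed.

Lemma sub_meas_comp {G f} {phi : R -> R} :
  measurable_fun setT phi -> sub_meas G f -> sub_meas G (phi \o f).
Proof.
move=> mphi Gf B mB; rewrite comp_preimage; apply: Gf.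
by have := mphi measurableT B mB; rewrite setTI.
Qed.

Lemma sub_measP {S f} :
  sub_meas <<s S >> f <-> measurable_fun [set: g_sigma_algebraType S] f.
Proof.
split => [Sf _ B mB|mf B mB]; first by rewrite setTI; exact: Sf.
by have := mf measurableT B mB; rewrite setTI.
Qed.

Lemma sub_meas_cst {S} (c : R) : sub_meas <<s S >> (fun=> c).
Proof. exact/sub_measP/measurable_cst. Qed.

Lemma sub_measB {S f h} : sub_meas <<s S >> f -> sub_meas <<s S >> h ->
  sub_meas <<s S >> (fun w => f w - h w).
Proof. by move=> /sub_measP mf /sub_measP mh; exact/sub_measP/measurable_funB. Qed.

Lemma sub_measM {S f h} : sub_meas <<s S >> f -> sub_meas <<s S >> h ->
  sub_meas <<s S >> (fun w => f w * h w).
Proof. by move=> /sub_measP mf /sub_measP mh; exact/sub_measP/measurable_funM. Qed.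

Lemma sub_measV {S f} : sub_meas <<s S >> f -> sub_meas <<s S >> (fun w => (f w)^-1).
Proof.
move=> /sub_measP mf; apply/sub_measP.
exact: (measurableT_comp (measurable_inv R) mf).
Qed.

Lemma sub_meas_ltr {S f h} : sub_meas <<s S >> f -> sub_meas <<s S >> h ->
  <<s S >> [set w | f w < h w].
Proof.
move=> /sub_measP mf /sub_measP mh.
have := measurable_fun_ltr mf mh measurableT (Y := [set true]) I.
by rewrite setTI; congr (<<s S >> _); apply/seteqP; split => w /=.
Qed.

End SubMeas.

Section WeightedIntegral.
Context {R : realType} {d : measure_display} {Omega : measurableType d}
  (P : probability Omega R) (G : set (set Omega)).
Hypothesis G_measurable : G `<=` measurable.
Variables u v : Omega -> R.
Hypotheses (iu : intg P u) (iv : intg P v).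
Hypothesis integral_uv :
  forall A, G A -> (\int[P]_(w in A) (u w)%:E = \int[P]_(w in A) (v w)%:E)%E.

Definition weights_alike (h : Omega -> R) := [/\ intg P (fun w => h w * u w),
  intg P (fun w => h w * v w) &
  (\int[P]_w (h w * u w)%:E = \int[P]_w (h w * v w)%:E)%E].

Lemma weights_alike_indic A : G A -> weights_alike (\1_A).
Proof.
move=> GA; have mA := G_measurable _ GA.
split; [exact: intg_indicM | exact: intg_indicM |].
by rewrite -!integral_indicMr //; exact: integral_uv.
Qed.

Lemma weights_alike0 : weights_alike (fun=> 0).
Proof.
have i0 z : intg P (fun w => 0 * z w).
  by apply: (eq_intg (intg_cst P 0)) => w; rewrite mul0r.
by split; [exact: i0 | exact: i0 | apply: eq_integral => w _; rewrite !mul0r].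
Qed.

Lemma weights_alikeZ c h : weights_alike h -> weights_alike (fun w => c * h w).
Proof.
have ZE z : intg P (fun w => h w * z w) ->
    (\int[P]_w (c * h w * z w)%:E = c%:E * \int[P]_w (h w * z w)%:E)%E.
  move=> ihz; rewrite -(integralZl measurableT ihz).
  by apply: eq_integral => w _; rewrite -EFinM mulrA.
case=> ihu ihv e; split; last by rewrite !ZE // e.
- by apply: (eq_intg (intgZ c ihu)) => w; rewrite mulrA.
- by apply: (eq_intg (intgZ c ihv)) => w; rewrite mulrA.
Qed.

Lemma weights_alikeD h1 h2 : weights_alike h1 -> weights_alike h2 ->
  weights_alike (fun w => h1 w + h2 w).
Proof.
case=> i1u i1v e1 [i2u i2v e2].
have DE z : intg P (fun w => h1 w * z w) -> intg P (fun w => h2 w * z w) ->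
    (\int[P]_w ((h1 w + h2 w) * z w)%:E
     = \int[P]_w (h1 w * z w)%:E + \int[P]_w (h2 w * z w)%:E)%E.
  move=> i1 i2; rewrite -integralD_EFin //.
  by apply: eq_integral => w _; rewrite mulrDl.
split; last by rewrite !DE // e1 e2.
- by apply: (eq_intg (intgD i1u i2u)) => w; rewrite mulrDl.
- by apply: (eq_intg (intgD i1v i2v)) => w; rewrite mulrDl.
Qed.

Lemma weights_alike_sum (I : Type) (s : seq I) (h : I -> Omega -> R) :
  (forall i, weights_alike (h i)) -> weights_alike (fun w => \sum_(i <- s) h i w).
Proof.
move=> hs; elim: s => [|i s IH].
  by under [fun w => _]funext do rewrite big_nil; exact: weights_alike0.
under [fun w => _]funext do rewrite big_cons.
exact: weights_alikeD.
Qed.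

(* For f >= 0, the dyadic approximations of f are linear combinations of
   indicators of sets in G; pass to the limit by dominated convergence. *)
Section NonNegative.
Variable f : Omega -> R.
Hypotheses (f_ge0 : forall w, 0 <= f w) (Gf : sub_meas G f).

Let mf : measurable_fun setT (EFin \o f).
Proof. exact/measurable_EFinP/(sub_meas_measurable G_measurable). Qed.

Let s := nnsfun_approx measurableT mf.

Lemma weights_alike_approx n : weights_alike (s n).
Proof.
rewrite nnsfun_approxE /approx; apply: weights_alikeD; last first.
  apply/weights_alikeZ/weights_alike_indic.
  suff -> : integer_approx setT (EFin \o f) n = f @^-1` `[n%:R, +oo[.
    by apply: Gf; exact: measurable_itv.
  apply/seteqP; split=> x /=; rewrite /integer_approx /= in_itv /= andbT lee_fin.
    by case.
  by split.
apply: weights_alike_sum => k; apply/weights_alikeZ/weights_alike_indic.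
rewrite /dyadic_approx; case: ifPn => _; last first.
  by rewrite -(preimage_set0 f); exact: Gf measurable0.
suff -> : setT `&` [set x | (EFin \o f) x \in EFin @` [set` dyadic_itv R n k]]
    = f @^-1` [set` dyadic_itv R n k] by apply: Gf; exact: measurable_itv.
apply/seteqP; split=> x /=; first by case=> _; rewrite inE => -[y yI [<-]].
by move=> fx; split=> //; apply/mem_set; exists (f x).
Qed.

Lemma integral_approx_mul_cvg {z} : intg P z -> intg P (fun w => f w * z w) ->
  (\int[P]_w (s n w * z w)%:E @[n --> \oo] --> \int[P]_w (f w * z w)%:E)%E.
Proof.
move=> iz ifz.
have [] := @dominated_convergence _ _ _ P setT measurableT
  (fun n w => (s n w * z w)%:E) (fun w => (f w * z w)%:E)
  (fun w => `|(f w * z w)%:E|)%E.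
- by move=> n; apply/measurable_EFinP/measurable_funM => //; exact: intg_measurable iz.
- exact/measurable_EFinP/(intg_measurable ifz).
- apply: aeW => x _; apply: cvg_EFin; first exact: nearW.
  apply: cvgMr_tmp.
  have -> : (fun n => s n x) = approx setT (EFin \o f) ^~ x.
    by apply/funext => n; rewrite nnsfun_approxE.
  exact: (@cvg_approx _ _ _ setT (EFin \o f) x (fun x _ => f_ge0 x) I (ltry _)).
- exact: integrable_abse.
- apply: aeW => x n _ /=; rewrite lee_fin !normrM ler_wpM2r //.
  rewrite (ger0_norm (f_ge0 x)) ger0_norm; last exact: fun_ge0.
  have := @le_approx _ _ _ setT (EFin \o f) n x (fun x _ => f_ge0 x) I.
  by rewrite nnsfun_approxE lee_fin.
- by [].
Qed.

Lemma integral_mul_eq_ge0 :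
  intg P (fun w => f w * u w) -> intg P (fun w => f w * v w) ->
  (\int[P]_w (f w * u w)%:E = \int[P]_w (f w * v w)%:E)%E.
Proof.
move=> ifu ifv; have := integral_approx_mul_cvg iu ifu.
have -> : (fun n => \int[P]_w (s n w * u w)%:E)%E
          = (fun n => \int[P]_w (s n w * v w)%:E)%E.
  by apply/funext => n; case: (weights_alike_approx n).
by move/cvg_unique; apply; [exact: ereal_hausdorff | exact: integral_approx_mul_cvg].
Qed.

End NonNegative.

Lemma integral_mul_eq f : sub_meas G f ->
  intg P (fun w => f w * u w) -> intg P (fun w => f w * v w) ->
  (\int[P]_w (f w * u w)%:E = \int[P]_w (f w * v w)%:E)%E.
Proof.
move=> Gf ifu ifv.
have mp : measurable_fun [set: R] (fun x : R => Num.max x 0) :=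
  measurable_funrpos (measurable_id (D:=setT)).
have mn : measurable_fun [set: R] (fun x : R => Num.max (- x) 0) :=
  measurable_funrneg (measurable_id (D:=setT)).
have Gfp : sub_meas G f^\+ := sub_meas_comp mp Gf.
have Gfn : sub_meas G f^\- := sub_meas_comp mn Gf.
have intg_part h z : sub_meas G h -> (forall w, `|h w| <= `|f w|) ->
    intg P z -> intg P (fun w => f w * z w) -> intg P (fun w => h w * z w).
  move=> Gh hf iz ifz; apply: (intg_le ifz) => [|w].
    apply: measurable_funM; first exact: sub_meas_measurable G_measurable Gh.
    exact: intg_measurable iz.
  by rewrite !normrM ler_wpM2r.
have part_le w : `|f^\+ w| <= `|f w| /\ `|f^\- w| <= `|f w|.
  rewrite (ger0_norm (funrpos_ge0 f w)) (ger0_norm (funrneg_ge0 f w)).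
  by rewrite /funrpos /funrneg !ge_max normr_ge0 ler_norm -normrN ler_norm.
have ipos := intg_part _ _ Gfp (fun w => (part_le w).1).
have ineg := intg_part _ _ Gfn (fun w => (part_le w).2).
have E z : intg P z -> intg P (fun w => f w * z w) ->
    (\int[P]_w (f w * z w)%:E
     = \int[P]_w (f^\+ w * z w)%:E - \int[P]_w (f^\- w * z w)%:E)%E.
  move=> iz ifz; rewrite -integralB_EFin //; [|exact: ipos|exact: ineg].
  by apply: eq_integral => w _; rewrite -EFinB -mulrBl -[in LHS](funrposBneg f).
rewrite E // [RHS]E //.
by rewrite !integral_mul_eq_ge0 //;
  [exact: ineg iu ifu | exact: ineg iv ifv | exact: ipos iu ifu | exact: ipos iv ifv].
Qed.

End WeightedIntegral.
Arguments integral_mul_eq {R d Omega P G} G_measurable {u v} iu iv integral_uv {f}.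

Definition arm_indic {T} {R : realType} (Rv : T -> bool) (r : bool) (w : T) : R :=
  if r then ind (Rv w) else 1 - ind (Rv w).

Definition arm_prob {T} {R : realType} (g : T -> R) (r : bool) (w : T) : R :=
  if r then g w else 1 - g w.

Section Arm.
Context {R : realType} {d : measure_display} {Omega : measurableType d}
  (P : probability Omega R) (Rv : Omega -> bool).
Hypothesis mRv : measurable_fun setT Rv.
Implicit Types (f g h y p q : Omega -> R) (G : set (set Omega)).

Lemma arm_indicE r w : arm_indic Rv r w = \1_[set w | Rv w = r] w :> R.
Proof.
rewrite /arm_indic indicE /ind; case: r; case E: (Rv w) => /=;
  [rewrite mem_set|rewrite memNset|rewrite memNset|rewrite mem_set] => //=;
  by rewrite ?subrr ?subr0 // E.
Qed.

Lemma measurable_arm r : measurable [set w | Rv w = r].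
Proof. by have := mRv measurableT [set r] I; rewrite setTI. Qed.

Lemma integral_arm r A y :
  (\int[P]_(w in A `&` [set w | Rv w = r]) (y w)%:E
   = \int[P]_(w in A) (arm_indic Rv r w * y w)%:E)%E.
Proof.
rewrite integral_mkcondr; apply: eq_integral => w _.
by rewrite arm_indicE /patch indicE; case: (w \in _); rewrite /= ?mul1r ?mul0r.
Qed.

Lemma intg_arm {r y} : P.-integrable [set w | Rv w = r] (EFin \o y) ->
  intg P (fun w => arm_indic Rv r w * y w).
Proof.
move=> /(integrable_mkcond _ (measurable_arm r)); apply: eq_integrable => // w _ /=.
by rewrite arm_indicE /patch indicE; case: (w \in _); rewrite /= ?mul1r ?mul0r.
Qed.

Lemma intg_arm_indic r : intg P (arm_indic Rv r).
Proof.
apply: (intg_le (intg_cst P 1)) => [|w].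
  have -> : arm_indic Rv r = \1_[set w | Rv w = r] :> (Omega -> R).
    by apply/funext => w; rewrite arm_indicE.
  exact/measurable_indic/measurable_arm.
by rewrite arm_indicE indicE; case: (w \in _); rewrite ?normr1 ?normr0.
Qed.

Lemma mean_condexp_arm G r y h f p q : G `<=` measurable ->
  is_condexp_arm P Rv r G y h -> sub_meas G f -> intg P p -> intg P q ->
  (forall w, p w = f w * (arm_indic Rv r w * y w)) ->
  (forall w, q w = f w * (arm_indic Rv r w * h w)) ->
  mean P p = mean P q.
Proof.
move=> GM [_ iy ih yh] Gf ip iq /funext pE /funext qE; subst p q.
congr fine; apply: (integral_mul_eq GM (intg_arm iy) (intg_arm ih)) => // A GA.
by rewrite -!integral_arm yh.
Qed.

Lemma integral_arm_prob G r g A : G `<=` measurable ->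
  is_condexp P G (fun w => ind (Rv w)) g -> G A ->
  (\int[P]_(w in A) (arm_indic Rv r w)%:E = \int[P]_(w in A) (arm_prob g r w)%:E)%E.
Proof.
move=> GM [_ iind ig indg] GA; have mA := GM _ GA; case: r; first exact: indg.
have i1 : P.-integrable A (EFin \o fun=> (1 : R)).
  exact: finite_measure_integrable_cst.
rewrite /arm_indic /arm_prob !(integralB_EFin mA) ?indg //.
  exact: integrableS ig.
exact: integrableS iind.
Qed.

Lemma mean_condexp_indic G r g f p q : G `<=` measurable ->
  is_condexp P G (fun w => ind (Rv w)) g -> sub_meas G f -> intg P p -> intg P q ->
  (forall w, p w = f w * arm_indic Rv r w) ->
  (forall w, q w = f w * arm_prob g r w) ->
  mean P p = mean P q.
Proof.
move=> GM condexp_g Gf ip iq /funext pE /funext qE; subst p q.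
have ig : intg P (arm_prob g r).
  by case: condexp_g => _ _ ig _; case: (r) => //; exact: intgB (intg_cst P 1) ig.
congr fine; apply: (integral_mul_eq GM (intg_arm_indic r) ig) => // A.
exact: integral_arm_prob.
Qed.

End Arm.
Arguments measurable_arm {d Omega Rv} mRv r.
Arguments integral_arm_prob {R d Omega P Rv G} r {g A}.
Arguments mean_condexp_arm {R d Omega P Rv} mRv {G r y h} f {p q}.
Arguments mean_condexp_indic {R d Omega P Rv} mRv {G} r {g} f {p q}.

Section ArmUniqueness.
Context {R : realType} {d : measure_display} {Omega : measurableType d}
  (P : probability Omega R) (Rv : Omega -> bool).
Hypothesis mRv : measurable_fun setT Rv.
Implicit Types (f g h y : Omega -> R) (G : set (set Omega)).

Lemma eq_integral_ae D f h : {ae P, forall w, f w = h w} -> measurable D ->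
  measurable_fun setT f -> measurable_fun setT h ->
  (\int[P]_(w in D) (f w)%:E = \int[P]_(w in D) (h w)%:E)%E.
Proof.
move=> fh mD mf mh; apply: ae_eq_integral => //.
- exact/measurable_EFinP/(measurable_funS measurableT).
- exact/measurable_EFinP/(measurable_funS measurableT).
- by apply: filterS fh => w fhw _; rewrite /= fhw.
Qed.

Lemma null_set_integral_pos {E f} : measurable E -> measurable_fun setT f ->
  {ae P, forall w, 0 < f w} -> (\int[P]_(w in E) (f w)%:E = 0)%E -> P E = 0.
Proof.
move=> mE mf [N [mN N0 fpos]] intE0.
have mfE : measurable_fun E (EFin \o f).
  exact/measurable_EFinP/(measurable_funS measurableT).
have : (\int[P]_(w in E) `|(f w)%:E| = 0)%E.
  rewrite -intE0; apply: ae_eq_integral => //.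
  - exact: measurableT_comp.
  - exists N; split => // w /= Nw; apply: fpos => /= fw; apply: Nw => _.
    by rewrite /= gtr0_norm.
move=> /(ae_eq_integral_abs P mE mfE).1 [N' [mN' N'0 f0]].
apply: (@subset_measure0 _ _ _ P _ _ mE (measurableU _ _ mN mN')).
  move=> w Ew; have [fw|fw] := boolP (0 < f w).
    by right; apply: f0 => /= /(_ Ew) [] /eqP; rewrite gt_eqF.
  by left; apply: fpos => /=; apply/negP.
exact: null_set_setU.
Qed.

Section LtNull.
Variables (S : set (set Omega)) (r : bool) (g h1 h2 : Omega -> R).
Hypothesis S_measurable : <<s S >> `<=` measurable.
Hypothesis condexp_g : is_condexp P <<s S >> (fun w => ind (Rv w)) g.
Hypothesis g01 : {ae P, forall w, 0 < g w < 1}.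
Hypotheses (Sh1 : sub_meas <<s S >> h1) (Sh2 : sub_meas <<s S >> h2).
Hypotheses (ih1 : P.-integrable [set w | Rv w = r] (EFin \o h1))
  (ih2 : P.-integrable [set w | Rv w = r] (EFin \o h2)).
Hypothesis integral_h12 : forall A, <<s S >> A ->
  (\int[P]_(w in A `&` [set w | Rv w = r]) (h1 w)%:E
   = \int[P]_(w in A `&` [set w | Rv w = r]) (h2 w)%:E)%E.

(* The hypotheses only control h1 - h2 on the arm {Rv = r}: they give
   P(E `&` arm) = 0, i.e. E[P(Rv = r | S); E] = 0 for E := {h2 < h1} in S, and
   positivity of P(Rv = r | S) then forces P(E) = 0. *)
Lemma condexp_arm_lt_null : P [set w | h2 w < h1 w] = 0.
Proof.
set E := [set w | h2 w < h1 w].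
have SE : <<s S >> E by exact: sub_meas_ltr.
have mE := S_measurable _ SE.
set D := E `&` [set w | Rv w = r].
have mD : measurable D by exact/measurableI/(measurable_arm mRv).
have mh1 := sub_meas_measurable S_measurable Sh1.
have mh2 := sub_meas_measurable S_measurable Sh2.
have PD0 : P D = 0.
  have mdiff : measurable_fun D (fun w => (h1 w - h2 w)%:E).
    exact/measurable_EFinP/(measurable_funS measurableT)/measurable_funB.
  have : (\int[P]_(w in D) `|(h1 w - h2 w)%:E| = 0)%E.
    transitivity (\int[P]_(w in D) ((h1 w)%:E - (h2 w)%:E))%E.
      apply: eq_integral => w; rewrite inE => -[Ew _].
      by rewrite /= gtr0_norm // subr_gt0.
    have iD h : P.-integrable [set w | Rv w = r] (EFin \o h) ->
        P.-integrable D (EFin \o h).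
      by apply: integrableS (measurable_arm mRv _) mD _; exact: subIsetr.
    rewrite integralB_EFin ?iD // integral_h12 // subee //.
    exact/integrable_fin_num/iD.
  move=> /(ae_eq_integral_abs P mD mdiff).1 [N [mN N0 diff0]].
  apply: (@subset_measure0 _ _ _ P _ _ mD mN _ N0) => w Dw.
  apply: diff0 => /= /(_ Dw) [] /eqP; rewrite subr_eq0.
  by case: Dw => /= /lt_eqF; rewrite eq_sym => ->.
have mprob : measurable_fun setT (arm_prob g r).
  have [Sg _ _ _] := condexp_g.
  have mg := sub_meas_measurable S_measurable Sg.
  by case: (r); last exact: measurable_funB.
apply: (null_set_integral_pos mE mprob).
  apply: filterS g01 => w /andP[g0 g1].
  by case: (r); rewrite /arm_prob ?subr_gt0.
rewrite -(integral_arm_prob r S_measurable condexp_g SE).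
rewrite (eq_integral (fun w => (\1_[set w | Rv w = r] w)%:E)); last first.
  by move=> w _; rewrite arm_indicE.
by rewrite integral_indic 1?setIC //; exact: measurable_arm.
Qed.

End LtNull.

Lemma condexp_arm_ae_unique S r g h1 h2 : <<s S >> `<=` measurable ->
  is_condexp P <<s S >> (fun w => ind (Rv w)) g -> {ae P, forall w, 0 < g w < 1} ->
  sub_meas <<s S >> h1 -> sub_meas <<s S >> h2 ->
  P.-integrable [set w | Rv w = r] (EFin \o h1) ->
  P.-integrable [set w | Rv w = r] (EFin \o h2) ->
  (forall A, <<s S >> A ->
    \int[P]_(w in A `&` [set w | Rv w = r]) (h1 w)%:E
    = \int[P]_(w in A `&` [set w | Rv w = r]) (h2 w)%:E)%E ->
  {ae P, forall w, h1 w = h2 w}.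
Proof.
move=> SM cg g01 Sh1 Sh2 ih1 ih2 h12.
have lt21 := condexp_arm_lt_null _ _ _ _ _ SM cg g01 Sh1 Sh2 ih1 ih2 h12.
have lt12 : P [set w | h1 w < h2 w] = 0.
  apply: (condexp_arm_lt_null _ _ _ _ _ SM cg g01 Sh2 Sh1 ih2 ih1) => A SA.
  by rewrite h12.
have m21 := SM _ (sub_meas_ltr Sh2 Sh1).
have m12 := SM _ (sub_meas_ltr Sh1 Sh2).
exists ([set w | h2 w < h1 w] `|` [set w | h1 w < h2 w]); split.
- exact: measurableU.
- exact: null_set_setU.
- move=> w /= neq; have [?|?|?] := ltgtP (h1 w) (h2 w); [by right | by left |].
  by case: neq.
Qed.

End ArmUniqueness.
Arguments condexp_arm_ae_unique {R d Omega P Rv} mRv {S r g h1 h2}.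
Arguments eq_integral_ae {R d Omega P D f h}.

Section SigmaMX.
Context {d : measure_display} {Omega : measurableType d}
  {dX d1 d2 d3 d4 : measure_display} {TX : measurableType dX}
  {T1 : measurableType d1} {T2 : measurableType d2}
  {T3 : measurableType d3} {T4 : measurableType d4}
  (X : Omega -> TX) (M1 : Omega -> T1) (M2 : Omega -> T2)
  (M3 : Omega -> T3) (M4 : Omega -> T4).

Lemma preim_sys_measurable {dT} {T : measurableType dT} (Z : Omega -> T) :
  measurable_fun setT Z -> preim_sys Z `<=` measurable.
Proof. by move=> mZ _ [B mB <-]; have := mZ measurableT B mB; rewrite setTI. Qed.

Lemma sigmaMX_measurable j : measurable_fun setT X ->
  measurable_fun setT M1 -> measurable_fun setT M2 ->
  measurable_fun setT M3 -> measurable_fun setT M4 ->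
  sigmaMX X M1 M2 M3 M4 j `<=` measurable.
Proof.
move=> mX m1 m2 m3 m4; apply: smallest_sub; first exact: sigma_algebra_measurable.
move=> A [[[[XA|]|]|]|]; first exact: preim_sys_measurable mX _ XA.
all: by case: ifP => // _; exact: preim_sys_measurable.
Qed.

Lemma sigmaMX_mono i j : (i <= j)%N ->
  sigmaMX X M1 M2 M3 M4 i `<=` sigmaMX X M1 M2 M3 M4 j.
Proof.
move=> ij; apply: sub_sigma_algebra2.
move=> A [[[[XA|]|]|]|]; first by do 4 left.
- by case: ifP => // h A1; do 3 left; right; rewrite (leq_trans h ij).
- by case: ifP => // h A2; do 2 left; right; rewrite (leq_trans h ij).
- by case: ifP => // h A3; left; right; rewrite (leq_trans h ij).
- by case: ifP => // h A4; right; rewrite (leq_trans h ij).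
Qed.

End SigmaMX.

Section ArmTower.
Context {R : realType} {d : measure_display} {Omega : measurableType d}
  (P : probability Omega R) (Rv : Omega -> bool) (r : bool).
Implicit Types (y h : Omega -> R) (G : set (set Omega)).

Lemma condexp_arm_trans G G' y (h' h : Omega -> R) : G `<=` G' ->
  is_condexp_arm P Rv r G' y h' -> is_condexp_arm P Rv r G h' h ->
  is_condexp_arm P Rv r G y h.
Proof.
move=> GG' [_ iy _ yh'] [Gh _ ih h'h]; split => // A GA.
by rewrite yh' ?h'h //; exact: GG'.
Qed.

Lemma condexp_arm_chain (G : nat -> set (set Omega)) y (h : nat -> Omega -> R) m n :
  (forall i j, (i <= j)%N -> G i `<=` G j) -> (m <= n)%N ->
  is_condexp_arm P Rv r (G n) y (h n) ->
  (forall j, (m < j <= n)%N -> is_condexp_arm P Rv r (G j.-1) (h j) (h j.-1)) ->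
  is_condexp_arm P Rv r (G m) y (h m).
Proof.
move=> Gmono; elim: n => [|n IH] mn yhn hstep.
  by move: mn yhn; rewrite leqn0 => /eqP ->.
move: mn; rewrite leq_eqVlt ltnS => /orP[/eqP -> //|mn].
apply: IH => // [|j /andP[mj jn]]; last by apply: hstep; rewrite mj (leqW jn).
apply: condexp_arm_trans (Gmono _ _ (leqnSn n)) yhn _.
by apply: (hstep n.+1); rewrite ltnS mn leqnn.
Qed.

End ArmTower.
Arguments condexp_arm_chain {R d Omega P Rv r G y h m n}.

Section Remainder.
Context {R : realType} {d : measure_display} {Omega : measurableType d}
  (P : probability Omega R).
Context {dX d1 d2 d3 d4 : measure_display} {TX : measurableType dX}
  {T1 : measurableType d1} {T2 : measurableType d2}
  {T3 : measurableType d3} {T4 : measurableType d4}.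
Variables (X : Omega -> TX) (Rv : Omega -> bool)
  (M1 : Omega -> T1) (M2 : Omega -> T2) (M3 : Omega -> T3) (M4 : Omega -> T4)
  (Y : Omega -> R) (g : nat -> Omega -> R) (mu B C : Omega -> R)
  (Q : nat -> Omega -> R) (gh : nat -> Omega -> R) (muh Bh Ch : Omega -> R)
  (k : nat).
Let sig := sigmaMX X M1 M2 M3 M4.
Hypothesis k_range : (1 <= k <= 4)%N.
Hypotheses (mX : measurable_fun setT X) (mRv : measurable_fun setT Rv)
  (mM1 : measurable_fun setT M1) (mM2 : measurable_fun setT M2)
  (mM3 : measurable_fun setT M3) (mM4 : measurable_fun setT M4).
Hypothesis condexp_g :
  forall j, (j <= 4)%N -> is_condexp P (sig j) (fun w => ind (Rv w)) (g j).
Hypothesis g01 : forall j, (j <= 4)%N -> {ae P, forall w, 0 < g j w < 1}.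
Hypothesis condexp_mu : is_condexp_arm P Rv false (sig k) Y mu.
Hypothesis condexp_B : is_condexp_arm P Rv true (sig k.-1) mu B.
Hypothesis condexp_C : (2 <= k)%N -> is_condexp_arm P Rv false (sig 0) B C.
Hypothesis C_k1 : k = 1%N -> C = B.
Hypothesis condexp_Q4 : is_condexp_arm P Rv false (sig 4) Y (Q 4).
Hypothesis condexp_Q : forall j, (1 <= j <= 4)%N ->
  is_condexp_arm P Rv (j == k) (sig j.-1) (Q j) (Q j.-1).

Let k4 : (k <= 4)%N. Proof. by case/andP: k_range. Qed.
Let km1_4 : (k.-1 <= 4)%N. Proof. exact: leq_trans (leq_pred k) k4. Qed.

Let sig_measurable j : sig j `<=` measurable.
Proof. exact: sigmaMX_measurable. Qed.

Let sig_mono i j : (i <= j)%N -> sig i `<=` sig j.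
Proof. exact: sigmaMX_mono. Qed.

Let measurable_sig j (f : Omega -> R) : sub_meas (sig j) f -> measurable_fun setT f.
Proof. exact: sub_meas_measurable. Qed.

Let meas_mu : sub_meas (sig k) mu. Proof. by case: condexp_mu. Qed.

Let meas_B : sub_meas (sig k.-1) B. Proof. by case: condexp_B. Qed.

Let meas_C : sub_meas (sig 0) C.
Proof.
case: (eqVneq k 1%N) => [k1|k_ne1]; last by case: (condexp_C ltac:(lia)).
by rewrite C_k1 //; move: meas_B; rewrite k1.
Qed.

Let condexp_Q_off j : (1 <= j <= 4)%N -> j != k ->
  is_condexp_arm P Rv false (sig j.-1) (Q j) (Q j.-1).
Proof. by move=> j14 /negbTE jk; have := condexp_Q _ j14; rewrite jk. Qed.

Lemma condexp_Qk : is_condexp_arm P Rv false (sig k) Y (Q k).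
Proof.
apply: (condexp_arm_chain sig_mono k4 condexp_Q4) => j /andP[kj j4].
apply: condexp_Q_off; lia.
Qed.

Lemma Qk_ae_mu : {ae P, forall w, Q k w = mu w}.
Proof.
have [SQ _ iQ Qint] := condexp_Qk; have [_ _ imu muint] := condexp_mu.
apply: (condexp_arm_ae_unique mRv (sig_measurable k) (condexp_g _ k4) (g01 _ k4)
  SQ meas_mu iQ imu) => A SA.
by rewrite -Qint // muint.
Qed.

Lemma Qkm1_ae_B : {ae P, forall w, Q k.-1 w = B w}.
Proof.
have := condexp_Q _ k_range; rewrite eqxx => -[SQ _ iQ Qint].
have [_ _ iB Bint] := condexp_B.
apply: (condexp_arm_ae_unique mRv (sig_measurable k.-1) (condexp_g _ km1_4)
  (g01 _ km1_4) SQ meas_B iQ iB) => A SA.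
have [SQk _ _ _] := condexp_Qk.
rewrite -Qint // -Bint //; apply: (eq_integral_ae Qk_ae_mu).
- exact: (measurableI _ _ (sig_measurable k.-1 _ SA) (measurable_arm mRv _)).
- exact: measurable_sig SQk.
- exact: measurable_sig meas_mu.
Qed.

Lemma Q0_ae_C : {ae P, forall w, Q 0 w = C w}.
Proof.
have [k1|k_ne1] := eqVneq k 1%N.
  by rewrite C_k1 //; have := Qkm1_ae_B; rewrite k1.
have k2 : (2 <= k)%N by lia.
have Q0 : is_condexp_arm P Rv false (sig 0) (Q k.-1) (Q 0).
  apply: (condexp_arm_chain sig_mono (leq0n k.-2)) => [|j /andP[j0 jk]];
    apply: condexp_Q_off; lia.
have [SQ0 _ iQ0 Q0int] := Q0; have [_ _ iC Cint] := condexp_C k2.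
apply: (condexp_arm_ae_unique mRv (sig_measurable 0) (condexp_g _ (leq0n 4))
  (g01 _ (leq0n 4)) SQ0 meas_C iQ0 iC) => A SA.
have [SQk1 _ _ _] := condexp_Q _ k_range.
rewrite -Q0int // -Cint //; apply: (eq_integral_ae Qkm1_ae_B).
- exact: (measurableI _ _ (sig_measurable 0 _ SA) (measurable_arm mRv _)).
- exact: measurable_sig SQk1.
- exact: measurable_sig meas_B.
Qed.

Lemma integral_Q0 : (\int[P]_w (Q 0 w)%:E = \int[P]_w (C w)%:E)%E.
Proof.
have [SQ0 _ _ _] := condexp_Q _ (isT : (1 <= 1 <= 4)%N).
apply: (eq_integral_ae Q0_ae_C) => //.
- exact: measurable_sig SQ0.
- exact: measurable_sig meas_C.
Qed.

Hypothesis meas_gh : forall j, j \in [:: 0%N; k.-1; k] -> sub_meas (sig j) (gh j).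
Hypothesis gh01 : forall j w, j \in [:: 0%N; k.-1; k] -> 0 < gh j w < 1.
Hypotheses (meas_muh : sub_meas (sig k) muh) (meas_Bh : sub_meas (sig k.-1) Bh)
  (meas_Ch : sub_meas (sig 0) Ch).
Hypothesis intg_terms : integrability_conditions P Rv Y (g 0) (gh 0) (g k.-1)
  (gh k.-1) (g k) (gh k) mu muh B Bh C Ch.

Let r0 : Omega -> R := arm_indic Rv false.
Let r1 : Omega -> R := arm_indic Rv true.
Let a w := 1 / (1 - gh 0 w).
Let b w := gh k w / (1 - gh k w).
Let c w := (1 - gh k.-1 w) / gh k.-1 w.

Local Ltac intg_term :=
  apply: (proj1 (List.Forall_forall _ _) intg_terms); cbn; tauto.

Local Ltac sub_meas_tac := rewrite ?/sig /sigmaMX;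
  do ![assumption | apply: sub_measM | apply: sub_measB | apply: sub_measV
      | apply: sub_meas_cst].

Local Ltac tower_side := solve [sub_meas_tac | intg_term
  | move=> w; rewrite /r0 /r1 /arm_indic /arm_prob /=; ring].

Let meas_gh0 : sub_meas (sig 0) (gh 0).
Proof. by apply: meas_gh; rewrite inE eqxx. Qed.

Let meas_ghkm1 : sub_meas (sig k.-1) (gh k.-1).
Proof. by apply: meas_gh; rewrite !inE eqxx orbT. Qed.

Let meas_ghk : sub_meas (sig k) (gh k).
Proof. by apply: meas_gh; rewrite !inE eqxx !orbT. Qed.

Let meas_a j : sub_meas (sig j) a.
Proof. apply: (sub_meas_sub (sig_mono _ _ (leq0n j))); rewrite /a; sub_meas_tac. Qed.

Let meas_a0 := meas_a 0.
Let meas_akm1 := meas_a k.-1.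
Let meas_ak := meas_a k.

Let meas_b : sub_meas (sig k) b.
Proof. rewrite /b; sub_meas_tac. Qed.

Let meas_c : sub_meas (sig k.-1) c.
Proof. rewrite /c; sub_meas_tac. Qed.

Let meas_c_k : sub_meas (sig k) c.
Proof. exact: sub_meas_sub (sig_mono _ _ (leq_pred k)) meas_c. Qed.

Let condexp_gk := condexp_g _ k4.
Let condexp_gkm1 := condexp_g _ km1_4.
Let condexp_g0 := condexp_g _ (leq0n 4).

Lemma tower_outcome :
  mean P (fun w => r0 w * a w * b w * c w * Y w)
    = mean P (fun w => (1 - g k w) * a w * b w * c w * mu w)
  /\ mean P (fun w => r0 w * a w * b w * c w * muh w)
    = mean P (fun w => (1 - g k w) * a w * b w * c w * muh w).
Proof.
split.
  transitivity (mean P (fun w => r0 w * a w * b w * c w * mu w)).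
    by apply: (mean_condexp_arm mRv (fun w => a w * b w * c w)
      (sig_measurable k) condexp_mu); tower_side.
  by apply: (mean_condexp_indic mRv false (fun w => a w * b w * c w * mu w)
    (sig_measurable k) condexp_gk); tower_side.
by apply: (mean_condexp_indic mRv false (fun w => a w * b w * c w * muh w)
  (sig_measurable k) condexp_gk); tower_side.
Qed.

Lemma tower_mediator :
  [/\ mean P (fun w => r1 w * a w * c w * muh w)
      = mean P (fun w => g k w * a w * c w * muh w),
      mean P (fun w => r1 w * a w * c w * Bh w)
      = mean P (fun w => g k.-1 w * a w * c w * Bh w) &
      mean P (fun w => g k w * a w * c w * mu w)
      = mean P (fun w => g k.-1 w * a w * c w * B w)].
Proof.
split.
- by apply: (mean_condexp_indic mRv true (fun w => a w * c w * muh w)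
    (sig_measurable k) condexp_gk); tower_side.
- by apply: (mean_condexp_indic mRv true (fun w => a w * c w * Bh w)
    (sig_measurable k.-1) condexp_gkm1); tower_side.
- transitivity (mean P (fun w => r1 w * a w * c w * mu w)).
    by apply: esym; apply: (mean_condexp_indic mRv true (fun w => a w * c w * mu w)
      (sig_measurable k) condexp_gk); tower_side.
  transitivity (mean P (fun w => r1 w * a w * c w * B w)).
    by apply: (mean_condexp_arm mRv (fun w => a w * c w)
      (sig_measurable k.-1) condexp_B); tower_side.
  by apply: (mean_condexp_indic mRv true (fun w => a w * c w * B w)
    (sig_measurable k.-1) condexp_gkm1); tower_side.
Qed.

Lemma tower_baseline :
  [/\ mean P (fun w => r0 w * a w * Bh w)
      = mean P (fun w => (1 - g k.-1 w) * a w * Bh w),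
      mean P (fun w => r0 w * a w * Ch w)
      = mean P (fun w => (1 - g 0 w) * a w * Ch w) &
      mean P (fun w => (1 - g k.-1 w) * a w * B w)
      = mean P (fun w => (1 - g 0 w) * a w * C w)].
Proof.
split.
- by apply: (mean_condexp_indic mRv false (fun w => a w * Bh w)
    (sig_measurable k.-1) condexp_gkm1); tower_side.
- by apply: (mean_condexp_indic mRv false (fun w => a w * Ch w)
    (sig_measurable 0) condexp_g0); tower_side.
- transitivity (mean P (fun w => r0 w * a w * B w)).
    by apply: esym; apply: (mean_condexp_indic mRv false (fun w => a w * B w)
      (sig_measurable k.-1) condexp_gkm1); tower_side.
  transitivity (mean P (fun w => r0 w * a w * C w)).
    case: (eqVneq k 1%N) => [k1|k_ne1]; first by rewrite C_k1.
    by apply: (mean_condexp_arm mRv a (sig_measurable 0) (condexp_C ltac:(lia)));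
      tower_side.
  by apply: (mean_condexp_indic mRv false (fun w => a w * C w)
    (sig_measurable 0) condexp_g0); tower_side.
Qed.

Let gh_neq0 w : [/\ 1 - gh 0 w != 0, 1 - gh k w != 0 & gh k.-1 w != 0].
Proof.
have /andP[_ gh0_1] := gh01 0 w (mem_head _ _).
have /andP[_ ghk_1] := gh01 k w ltac:(by rewrite !inE eqxx !orbT).
have /andP[ghkm1_0 _] := gh01 k.-1 w ltac:(by rewrite !inE eqxx orbT).
by rewrite !subr_eq0 !(eq_sym 1) (lt_eqF gh0_1) (lt_eqF ghk_1) (gt_eqF ghkm1_0).
Qed.

Lemma integral_hQ_sub_Q0 :
  (\int[P]_w (hQ Rv Y (gh 0) (gh k.-1) (gh k) muh Bh Ch w)%:E
     - \int[P]_w (Q 0 w)%:E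
   = \int[P]_w (remainder (g 0) (gh 0) (g k.-1) (gh k.-1) (g k) (gh k)
                   mu muh B Bh C Ch w)%:E)%E.
Proof.
pose hQ_terms : seq (R * (Omega -> R)) := [::
  (1, fun w => r0 w * a w * b w * c w * Y w);
  (-1, fun w => r0 w * a w * b w * c w * muh w);
  (1, fun w => r1 w * a w * c w * muh w);
  (-1, fun w => r1 w * a w * c w * Bh w);
  (1, fun w => r0 w * a w * Bh w);
  (-1, fun w => r0 w * a w * Ch w);
  (1, Ch)].
pose remainder_terms : seq (R * (Omega -> R)) := [::
  (1, fun w => (1 - g k w) * a w * b w * c w * mu w);
  (-1, fun w => (1 - g k w) * a w * b w * c w * muh w);
  (1, fun w => g k w * a w * c w * muh w);
  (-1, fun w => g k w * a w * c w * mu w);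
  (1, fun w => g k.-1 w * a w * c w * B w);
  (-1, fun w => g k.-1 w * a w * c w * Bh w);
  (1, fun w => (1 - g k.-1 w) * a w * Bh w);
  (-1, fun w => (1 - g k.-1 w) * a w * B w);
  (1, fun w => (1 - g 0 w) * a w * C w);
  (-1, fun w => (1 - g 0 w) * a w * Ch w);
  (1, Ch);
  (-1, C)].
have ihQ : List.Forall (fun x => intg P x.2) hQ_terms.
  by do ![apply: List.Forall_cons; first by intg_term | exact: List.Forall_nil].
have irem : List.Forall (fun x => intg P x.2) remainder_terms.
  by do ![apply: List.Forall_cons; first by intg_term | exact: List.Forall_nil].
have hQE w : hQ Rv Y (gh 0) (gh k.-1) (gh k) muh Bh Ch w = lincomb hQ_terms w.
  by rewrite /lincomb !big_cons big_nil /hQ /r0 /r1 /a /b /c /arm_indic /=; ring.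
have remE w : remainder (g 0) (gh 0) (g k.-1) (gh k.-1) (g k) (gh k)
    mu muh B Bh C Ch w = lincomb remainder_terms w.
  have [n1 n2 n3] := gh_neq0 w.
  rewrite /lincomb !big_cons big_nil /remainder /a /b /c /=.
  by field; rewrite n1 n2 n3.
rewrite (eq_integral (fun w => (lincomb hQ_terms w)%:E)); last first.
  by move=> w _; rewrite hQE.
rewrite [RHS](eq_integral (fun w => (lincomb remainder_terms w)%:E)); last first.
  by move=> w _; rewrite remE.
have iC : intg P C by intg_term.
rewrite integral_Q0 -(meanE (intg_lincomb ihQ)) -(meanE iC).
rewrite -(meanE (intg_lincomb irem)) -EFinB !mean_lincomb //.
rewrite !big_cons big_nil /=; congr EFin.
by move: tower_outcome tower_mediator tower_baseline => [? ?] [? ? ?] [? ? ?]; lra.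
Qed.

End Remainder.
Arguments integral_hQ_sub_Q0 {R d Omega P dX d1 d2 d3 d4 TX T1 T2 T3 T4 X Rv M1 M2 M3 M4
  Y g mu B C Q gh muh Bh Ch k}.

Lemma remainder_k1 {R : realType} {d : measure_display} {Omega : measurableType d}
    (pi pih g1 g1h mu muh B Bh : Omega -> R) w :
  0 < pih w < 1 -> g1h w < 1 ->
  remainder pi pih pi pih g1 g1h mu muh B Bh B Bh w
  = remainder1 pi pih g1 g1h mu muh B Bh w.
Proof.
move=> /andP[pih0 pih1] g1h1; rewrite /remainder /remainder1.
have n1 : 1 - pih w != 0 by rewrite subr_eq0 eq_sym lt_eqF.
have n2 : 1 - g1h w != 0 by rewrite subr_eq0 eq_sym lt_eqF.
by field; rewrite n1 n2 gt_eqF.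
Qed.

Theorem mainTheorem7
  (R : realType) (d : measure_display) (Omega : measurableType d)
  (P : probability Omega R)
  (dX d1 d2 d3 d4 : measure_display) (TX : measurableType dX)
  (T1 : measurableType d1) (T2 : measurableType d2)
  (T3 : measurableType d3) (T4 : measurableType d4)
  (X : Omega -> TX) (Rv : Omega -> bool)
  (M1 : Omega -> T1) (M2 : Omega -> T2) (M3 : Omega -> T3) (M4 : Omega -> T4)
  (Y : Omega -> R)
  (g : nat -> Omega -> R) (mu B C : Omega -> R) (Q : nat -> Omega -> R)
  (gh : nat -> Omega -> R) (muh Bh Ch : Omega -> R)
  (k : nat) :
  let sig := sigmaMX X M1 M2 M3 M4 in
  (1 <= k <= 4)%N ->
  measurable_fun setT X -> measurable_fun setT Rv ->
  measurable_fun setT M1 -> measurable_fun setT M2 ->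
  measurable_fun setT M3 -> measurable_fun setT M4 ->
  measurable_fun setT Y -> intg P (fun w => Y w ^+ 2) ->
  (forall j, (j <= 4)%N -> is_condexp P (sig j) (fun w => ind (Rv w)) (g j)) ->
  (forall j, (j <= 4)%N -> {ae P, forall w, 0 < g j w < 1}) ->
  is_condexp_arm P Rv false (sig k) Y mu ->
  is_condexp_arm P Rv true (sig k.-1) mu B ->
  ((2 <= k)%N -> is_condexp_arm P Rv false (sig 0) B C) ->
  (k = 1%N -> C = B) ->
  is_condexp_arm P Rv false (sig 4) Y (Q 4) ->
  (forall j, (1 <= j <= 4)%N ->
     is_condexp_arm P Rv (j == k) (sig j.-1) (Q j) (Q j.-1)) ->
  (forall j, j \in [:: 0%N; k.-1; k] -> sub_meas (sig j) (gh j)) ->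
  (forall j w, j \in [:: 0%N; k.-1; k] -> 0 < gh j w < 1) ->
  sub_meas (sig k) muh -> sub_meas (sig k.-1) Bh -> sub_meas (sig 0) Ch ->
  (k = 1%N -> Ch = Bh) ->
  integrability_conditions P Rv Y (g 0) (gh 0) (g k.-1) (gh k.-1) (g k) (gh k)
    mu muh B Bh C Ch ->
  (\int[P]_w (hQ Rv Y (gh 0) (gh k.-1) (gh k) muh Bh Ch w)%:E
     - \int[P]_w (Q 0 w)%:E
   = \int[P]_w (remainder (g 0) (gh 0) (g k.-1) (gh k.-1) (g k) (gh k)
                   mu muh B Bh C Ch w)%:E)%E
  /\
  (k = 1%N ->
   (\int[P]_w (hQ Rv Y (gh 0) (gh k.-1) (gh k) muh Bh Ch w)%:E
     - \int[P]_w (Q 0 w)%:E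
   = \int[P]_w (remainder1 (g 0) (gh 0) (g 1) (gh 1) mu muh B Bh w)%:E)%E).
Proof.
move=> sig k_range mX mRv mM1 mM2 mM3 mM4 _ _ condexp_g g01 condexp_mu condexp_B
  condexp_C C_k1 condexp_Q4 condexp_Q meas_gh gh01 meas_muh meas_Bh meas_Ch Ch_k1
  intg_terms.
have main := integral_hQ_sub_Q0 k_range mX mRv mM1 mM2 mM3 mM4 condexp_g g01
  condexp_mu condexp_B condexp_C C_k1 condexp_Q4 condexp_Q meas_gh gh01 meas_muh
  meas_Bh meas_Ch intg_terms.
split=> // k1; rewrite main; apply: eq_integral => w _; congr EFin.
have gh0_01 := gh01 0%N w (mem_head _ _).
have /andP[_ gh1_lt1] : 0 < gh 1%N w < 1.
  by rewrite -k1; apply: gh01; rewrite !inE eqxx !orbT.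
by rewrite C_k1 // Ch_k1 // k1 remainder_k1.
Qed.
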